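(* The function $\check J$ is coercive on $\mathcal M_T$: $\check J(\Sigma_{\rho_0},\dots,\Sigma_{\rho_{T-1}})\to\infty$ as $\|\Sigma_{\rho_k}\|\to\infty$ for any $k\in\{0,\dots,T-1\}$.
   Context: Fix integers $n,m,T\ge 1$, a scalar $\varepsilon>0$, matrices $A_k\in\mathbb R^{n\times n}$, $B_k\in\mathbb R^{n\times m}$ ($k=0,\dots,T-1$), and symmetric positive definite matrices $R_k\in\mathbb R^{m\times m}$, $\Sigma_{w_k}\in\mathbb R^{n\times n}$ ($k=0,\dots,T-1$), $F,\Sigma_{x_{\mathrm{ini}}}\in\mathbb R^{n\times n}$. Let $\mathcal M_T=(\mathbb S^m_{\succeq 0})^T$ with $\mathbb S^m_{\succeq0}$ the symmetric PSD $m\times m$ matrices; $\|\cdot\|$ the Frobenius norm; $\Sigma^{1/2}$ the PSD square root, $|\cdot|$ the determinant. For $(\Sigma_{\rho_0},\dots,\Sigma_{\rho_{T-1}})\in\mathcal M_T$ define backwards $\Pi_T=F$, $C_k=(R_k+B_k^\top\Pi_{k+1}B_k)/\varepsilon$, $\Pi_k=A_k^\top\Pi_{k+1}A_k-\frac1\varepsilon A_k^\top\Pi_{k+1}B_k\Sigma_{\rho_k}^{1/2}(I+\Sigma_{\rho_k}^{1/2}C_k\Sigma_{\rho_k}^{1/2})^{-1}\Sigma_{\rho_k}^{1/2}B_k^\top\Pi_{k+1}A_k$, $\Sigma_{Q_k}=\varepsilon(R_k+B_k^\top\Pi_{k+1}B_k)^{-1}$, and $\check J(\Sigma_{\rho_0},\dots,\Sigma_{\rho_{T-1}})=\frac12\Big[\mathrm{Tr}(\Pi_0\Sigma_{x_{\mathrm{ini}}})+\sum_{k=0}^{T-1}\Big(\varepsilon\log\frac{|\Sigma_{\rho_k}+\Sigma_{Q_k}|}{|\Sigma_{Q_k}|}+\mathrm{Tr}(\Pi_{k+1}\Sigma_{w_k})\Big)\Big]$.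 *)

From HB Require Import structures.
From mathcomp Require Import all_boot all_order all_algebra.
From mathcomp Require Import boolp classical_sets reals exp.
Set Implicit Arguments. Unset Strict Implicit. Unset Printing Implicit Defensive.
Import Order.TTheory GRing.Theory Num.Theory.
Local Open Scope ring_scope.

Section Defs.
Variable R : realType.

Definition psd (k : nat) (M : 'M[R]_k) : Prop :=
  M^T = M /\ forall x : 'cV[R]_k, 0 <= (x^T *m M *m x) 0 0.
Definition pd (k : nat) (M : 'M[R]_k) : Prop :=
  M^T = M /\ forall x : 'cV[R]_k, x != 0 -> 0 < (x^T *m M *m x) 0 0.

(* PSD square root: the (unique) PSD S with S *m S = M (chosen classically;
   0 if none exists, which never happens for PSD M). *)
Definition sqrtm (k : nat) (M : 'M[R]_k) : 'M[R]_k :=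
  xget 0 [set S | psd S /\ S *m S = M].

Definition frob (p q : nat) (M : 'M[R]_(p, q)) : R :=
  Num.sqrt (\sum_(i < p) \sum_(j < q) M i j ^+ 2).

Variables (n m T : nat) (eps : R).
Variables (A : nat -> 'M[R]_n) (B : nat -> 'M[R]_(n, m)) (Rk : nat -> 'M[R]_m)
          (Sw : nat -> 'M[R]_n) (F Sx : 'M[R]_n).
Variable Sig : nat -> 'M[R]_m.

Definition Cmat (k : nat) (Pn : 'M[R]_n) : 'M[R]_m :=
  eps^-1 *: (Rk k + (B k)^T *m Pn *m B k).

Definition Pi_step (k : nat) (Pn : 'M[R]_n) : 'M[R]_n :=
  let S := sqrtm (Sig k) in
  (A k)^T *m Pn *m A k
  - eps^-1 *: ((A k)^T *m Pn *m B k *m S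
               *m invmx (1%:M + S *m Cmat k Pn *m S)
               *m S *m (B k)^T *m Pn *m A k).

(* Pi_rev d = Pi_{T-d} *)
Fixpoint Pi_rev (d : nat) : 'M[R]_n :=
  match d with
  | 0 => F
  | d'.+1 => Pi_step (T - d'.+1) (Pi_rev d')
  end.

Definition Pi (k : nat) : 'M[R]_n := Pi_rev (T - k).

Definition SigQ (k : nat) : 'M[R]_m :=
  eps *: invmx (Rk k + (B k)^T *m Pi k.+1 *m B k).

Definition Jcheck : R :=
  2^-1 * (\tr (Pi 0 *m Sx)
          + \sum_(k < T) (eps * ln (\det (Sig k + SigQ k) / \det (SigQ k))
                          + \tr (Pi k.+1 *m Sw k))).
End Defs.

(* Each Riccati step maps PSD matrices to PSD matrices (complete the square),
   so every Pi_k is PSD: all trace terms of J are nonnegative, and so is every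
   log-determinant term.  Writing Sigma_rho = L^T L and
   N = eps Sigma_Q^-1 = R_k + B_k^T Pi_(k+1) B_k, Sylvester's identity gives
     det (Sigma_rho + Sigma_Q) / det Sigma_Q = det (1 + L N L^T / eps)
       >= 1 + tr (N Sigma_rho) / eps >= 1 + c |Sigma_rho| / eps,
   using det (1 + K) >= 1 + tr K and |K| <= tr K for K PSD (both by induction
   on the dimension via Schur complements), with c > 0 a common lower bound
   for the R_k.  Hence J >= eps/2 * ln (1 + c |Sigma_rho_k| / eps). *)

From HB Require Import structures.
From mathcomp Require Import all_boot all_order all_algebra ring lra.
From mathcomp Require Import boolp classical_sets reals sequences exp.
Set Implicit Arguments. Unset Strict Implicit. Unset Printing Implicit Defensive.
Import Order.TTheory GRing.Theory Num.Theory.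
Local Open Scope ring_scope.

Lemma deg2_ge0_discr (F : realFieldType) (a b c : F) : 0 <= a ->
  (forall t, 0 <= a * t ^+ 2 + 2 * b * t + c) -> b ^+ 2 <= a * c.
Proof.
move=> a_ge0 quad_ge0; have [a0|a_neq0] := eqVneq a 0.
  have [->|b_neq0] := eqVneq b 0; first by rewrite a0 expr0n mul0r.
  have := quad_ge0 (- (c + 1) / (2 * b)).
  have -> : 2 * b * (- (c + 1) / (2 * b)) = - (c + 1) by field.
  rewrite a0 mul0r add0r; lra.
have a_gt0 : 0 < a by rewrite lt_def a_neq0.
have := quad_ge0 (- b / a).
have -> : a * (- b / a) ^+ 2 + 2 * b * (- b / a) + c = c - b ^+ 2 / a by field.
by rewrite subr_ge0 ler_pdivrMr // mulrC.
Qed.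

Lemma cauchy_schwarz (F : realFieldType) p (u v : 'I_p -> F) :
  (\sum_i u i * v i) ^+ 2 <= (\sum_i u i ^+ 2) * (\sum_i v i ^+ 2).
Proof.
apply: deg2_ge0_discr => [|t]; first by apply: sumr_ge0 => i _; exact: sqr_ge0.
have -> : (\sum_i u i ^+ 2) * t ^+ 2 + 2 * (\sum_i u i * v i) * t + \sum_i v i ^+ 2
    = \sum_i (u i * t + v i) ^+ 2.
  rewrite mulr_suml mulr_sumr mulr_suml -!big_split /=.
  by apply: eq_bigr => i _; ring.
by apply: sumr_ge0 => i _; exact: sqr_ge0.
Qed.

Lemma det_sylvester (F : comNzRingType) p q (X : 'M[F]_(p, q)) (Y : 'M[F]_(q, p)) :
  \det (1%:M + X *m Y) = \det (1%:M + Y *m X).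
Proof.
have lfactor : block_mx 1%:M 0 Y 1%:M *m block_mx 1%:M (- X) 0 (1%:M + Y *m X)
    = block_mx 1%:M (- X) Y 1%:M.
  rewrite mulmx_block ?mul1mx ?mulmx1 ?mul0mx ?mulmx0 ?addr0 ?add0r.
  by rewrite mulmxN addrCA addNr addr0.
have rfactor : block_mx 1%:M (- X) 0 1%:M *m block_mx (1%:M + X *m Y) 0 Y 1%:M
    = block_mx 1%:M (- X) Y 1%:M.
  by rewrite mulmx_block ?mul1mx ?mulmx1 ?mul0mx ?mulmx0 ?addr0 ?add0r mulNmx addrK.
have := congr1 determinant lfactor; rewrite -rfactor !det_mulmx.
by rewrite det_lblock !det_ublock det_lblock !det1 !mul1r !mulr1 => ->.
Qed.

Lemma det_block_schur (F : fieldType) p c (u : 'rV[F]_p) (v : 'cV[F]_p) (D : 'M[F]_p) :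
  c != 0 -> \det (block_mx c%:M u v D : 'M_(1 + p)) = c * \det (D - c^-1 *: (v *m u)).
Proof.
move=> c_neq0.
have -> : block_mx c%:M u v D
    = block_mx 1%:M 0 (c^-1 *: v) 1%:M *m block_mx c%:M u 0 (D - c^-1 *: (v *m u)).
  rewrite mulmx_block ?mul1mx ?mul0mx ?mulmx0 ?addr0 ?add0r.
  by rewrite mul_mx_scalar scalerA mulfV // scale1r -scalemxAl addrC subrK.
by rewrite det_mulmx det_lblock det_ublock !det1 !mul1r det_scalar1.
Qed.

Section QuadraticForms.
Variable R : realType.

Definition qform p (Q : 'M[R]_p) (x y : 'cV[R]_p) : R := (x^T *m Q *m y) 0 0.

Lemma qformDl p (Q : 'M[R]_p) x1 x2 y : qform Q (x1 + x2) y = qform Q x1 y + qform Q x2 y.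
Proof. by rewrite /qform linearD /= !mulmxDl mxE. Qed.

Lemma qformDr p (Q : 'M[R]_p) x y1 y2 : qform Q x (y1 + y2) = qform Q x y1 + qform Q x y2.
Proof. by rewrite /qform !mulmxDr mxE. Qed.

Lemma qformZl p (Q : 'M[R]_p) a x y : qform Q (a *: x) y = a * qform Q x y.
Proof. by rewrite /qform linearZ /= -!scalemxAl mxE. Qed.

Lemma qformZr p (Q : 'M[R]_p) a x y : qform Q x (a *: y) = a * qform Q x y.
Proof. by rewrite /qform -scalemxAr mxE. Qed.

Lemma qformBl p (Q : 'M[R]_p) x1 x2 y : qform Q (x1 - x2) y = qform Q x1 y - qform Q x2 y.
Proof. by rewrite qformDl -scaleN1r qformZl mulN1r. Qed.

Lemma qformBr p (Q : 'M[R]_p) x y1 y2 : qform Q x (y1 - y2) = qform Q x y1 - qform Q x y2.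
Proof. by rewrite qformDr -scaleN1r qformZr mulN1r. Qed.

Lemma qform0l p (Q : 'M[R]_p) y : qform Q 0 y = 0.
Proof. by rewrite /qform trmx0 !mul0mx mxE. Qed.

Lemma qformMD p (Q1 Q2 : 'M[R]_p) x y : qform (Q1 + Q2) x y = qform Q1 x y + qform Q2 x y.
Proof. by rewrite /qform mulmxDr mulmxDl mxE. Qed.

Lemma qformMB p (Q1 Q2 : 'M[R]_p) x y : qform (Q1 - Q2) x y = qform Q1 x y - qform Q2 x y.
Proof. by rewrite qformMD /qform mulmxN mulNmx [X in _ + X]mxE. Qed.

Lemma qformMZ p (Q : 'M[R]_p) a x y : qform (a *: Q) x y = a * qform Q x y.
Proof. by rewrite /qform -scalemxAr -scalemxAl mxE. Qed.

Lemma qform_sym p (Q : 'M[R]_p) x y : Q^T = Q -> qform Q x y = qform Q y x.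
Proof.
move=> symQ; have tr11 (M : 'M[R]_1) : M 0 0 = M^T 0 0 by rewrite mxE.
by rewrite /qform [LHS]tr11 !trmx_mul trmxK symQ mulmxA.
Qed.

Lemma qform_mulmx p q (X : 'M[R]_(q, p)) (Q : 'M[R]_q) x y :
  qform (X^T *m Q *m X) x y = qform Q (X *m x) (X *m y).
Proof. by rewrite /qform trmx_mul !mulmxA. Qed.

Lemma qform1 p (x y : 'cV[R]_p) : qform 1%:M x y = \sum_i x i 0 * y i 0.
Proof. by rewrite /qform mulmx1 mxE; apply: eq_bigr => i _; rewrite mxE. Qed.

Lemma qform_delta p (Q : 'M[R]_p) i j : qform Q (delta_mx i 0) (delta_mx j 0) = Q i j.
Proof. by rewrite /qform trmx_delta -rowE -colE !mxE. Qed.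

Lemma qform_ge0 p (Q : 'M[R]_p) x : psd Q -> 0 <= qform Q x x.
Proof. by case=> _ /(_ x). Qed.

Lemma qform1_ge0 p (x : 'cV[R]_p) : 0 <= qform 1%:M x x.
Proof. by rewrite qform1; apply: sumr_ge0 => i _; rewrite -expr2 sqr_ge0. Qed.

Lemma qform1_gt0 p (x : 'cV[R]_p) : x != 0 -> 0 < qform 1%:M x x.
Proof.
move=> x_neq0; rewrite lt_def qform1_ge0 andbT; apply: contra x_neq0.
rewrite qform1 psumr_eq0 => [/allP x0|i _]; last by rewrite -expr2 sqr_ge0.
apply/eqP/matrixP => i j; rewrite (ord1 j) mxE.
by have /implyP/(_ isT) := x0 i (mem_index_enum _); rewrite -expr2 sqrf_eq0 => /eqP.
Qed.

Lemma pd_psd p (P : 'M[R]_p) : pd P -> psd P.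
Proof.
case=> symP posP; split=> // x; have [->|x_neq0] := eqVneq x 0.
  by rewrite -/(qform P 0 0) qform0l.
exact: ltW (posP x x_neq0).
Qed.

Lemma psd_mulmx p q (X : 'M[R]_(q, p)) (Q : 'M[R]_q) : psd Q -> psd (X^T *m Q *m X).
Proof.
move=> psdQ; have [symQ _] := psdQ.
split=> [|x]; first by rewrite !trmx_mul trmxK symQ mulmxA.
by rewrite -/(qform _ x x) qform_mulmx qform_ge0.
Qed.

Lemma pd1 p : pd (1%:M : 'M[R]_p).
Proof. by split=> [|x /qform1_gt0]; first exact: trmx1. Qed.

Lemma psdD p (P Q : 'M[R]_p) : psd P -> psd Q -> psd (P + Q).
Proof.
move=> [symP P_ge0] [symQ Q_ge0]; split=> [|x]; first by rewrite linearD /= symP symQ.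
by rewrite -/(qform _ x x) qformMD addr_ge0 //; [exact: P_ge0 | exact: Q_ge0].
Qed.

Lemma psdZ p (P : 'M[R]_p) a : 0 <= a -> psd P -> psd (a *: P).
Proof.
move=> a_ge0 [symP P_ge0]; split=> [|x]; first by rewrite linearZ /= symP.
by rewrite -/(qform _ x x) qformMZ mulr_ge0 //; exact: P_ge0.
Qed.

Lemma pd_unitmx p (P : 'M[R]_p) : pd P -> P \in unitmx.
Proof.
case=> _ posP; rewrite unitmxE unitfE; apply/negP => /det0P[v v_neq0 vP0].
have vT_neq0 : v^T != 0 by rewrite -(inj_eq (@trmx_inj _ _ _)) trmxK trmx0.
by have := posP _ vT_neq0; rewrite trmxK vP0 mul0mx mxE ltxx.
Qed.

Lemma pd_add_psd p (P Q : 'M[R]_p) : pd P -> psd Q -> pd (P + Q).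
Proof.
move=> [symP posP] [symQ Q_ge0]; split=> [|x x_neq0]; first by rewrite linearD /= symP symQ.
rewrite -/(qform _ x x) qformMD; apply: ltr_wpDr; first exact: Q_ge0.
exact: posP.
Qed.

Lemma psd_entry_sqr p (Q : 'M[R]_p) i j : psd Q -> Q i j ^+ 2 <= Q i i * Q j j.
Proof.
move=> psdQ; have [symQ _] := psdQ.
apply: deg2_ge0_discr => [|t]; first by rewrite -qform_delta qform_ge0.
have := qform_ge0 (t *: delta_mx i 0 + delta_mx j 0) psdQ.
rewrite !(qformDl, qformDr, qformZl, qformZr) !qform_delta.
have -> : Q j i = Q i j by rewrite -[in LHS]symQ mxE.
by congr (0 <= _); ring.
Qed.

End QuadraticForms.

Section SchurComplement.
Variable R : realType.

Lemma dotmxC p (x y : 'cV[R]_p) : x^T *m y = y^T *m x.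
Proof. by rewrite -[y in LHS]trmxK -trmx_mul [y^T *m x]mx11_scalar tr_scalar_mx. Qed.

Lemma qform_outer p (b y : 'cV[R]_p) : qform (b *m b^T) y y = (b^T *m y) 0 0 ^+ 2.
Proof. by rewrite /qform mulmxA -mulmxA dotmxC mxE big_ord1 expr2. Qed.

Lemma sym_blockE m (M : 'M[R]_(1 + m)) : M^T = M ->
  M = block_mx (M 0 0)%:M (dlsubmx M)^T (dlsubmx M) (drsubmx M).
Proof.
move=> symM; rewrite -[LHS]submxK trmx_dlsub symM; congr block_mx.
have lshift0 : lshift m (0 : 'I_1) = 0 by apply/val_inj.
by rewrite [LHS]mx11_scalar !mxE lshift0.
Qed.

Lemma qform_block m a (b : 'cV[R]_m) (D : 'M[R]_m) t y :
  qform (block_mx a%:M b^T b D : 'M_(1 + m)) (col_mx t%:M y) (col_mx t%:M y) =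
  a * t ^+ 2 + 2 * t * (b^T *m y) 0 0 + qform D y y.
Proof.
rewrite /qform tr_col_mx mul_row_block mul_row_col !mulmxDl tr_scalar_mx dotmxC.
rewrite !mul_scalar_mx !mul_mx_scalar -!scalemxAl !mxE eqxx mulr1n; ring.
Qed.

Lemma psd_block m a (b : 'cV[R]_m) (D : 'M[R]_m) :
  psd (block_mx a%:M b^T b D : 'M_(1 + m)) ->
  [/\ 0 <= a, psd D & forall y, (b^T *m y) 0 0 ^+ 2 <= a * qform D y y].
Proof.
move=> [symM posM].
have quad t y : 0 <= a * t ^+ 2 + 2 * t * (b^T *m y) 0 0 + qform D y y.
  by rewrite -qform_block; exact: posM.
have a_ge0 : 0 <= a by have := quad 1 0; rewrite mulmx0 qform0l mxE expr1n; lra.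
have D_ge0 y : 0 <= qform D y y.
  by have := quad 0 y; rewrite expr2 !(mulr0, mul0r) !add0r.
split=> // [|y].
  rewrite tr_block_mx trmxK tr_scalar_mx in symM.
  by have [_ _ _ symD] := eq_block_mx symM.
by apply: deg2_ge0_discr => // t; have := quad t y; congr (0 <= _); ring.
Qed.

Lemma psd_schur_compl m a (b : 'cV[R]_m) (D : 'M[R]_m) c :
  psd (block_mx a%:M b^T b D : 'M_(1 + m)) -> a <= c -> psd (D - c^-1 *: (b *m b^T)).
Proof.
move=> psdM a_le_c; have [a_ge0 [symD D_ge0] discr] := psd_block psdM.
split=> [|y]; first by rewrite linearB /= linearZ /= trmx_mul trmxK symD.
rewrite -/(qform _ y y) qformMB qformMZ qform_outer subr_ge0.
have [c0|c_neq0] := eqVneq c 0; first by rewrite c0 invr0 mul0r; exact: D_ge0.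
have c_gt0 : 0 < c by rewrite lt_def c_neq0 (le_trans a_ge0 a_le_c).
rewrite ler_pdivrMl //; apply: le_trans (discr y) _.
by rewrite ler_wpM2r //; exact: D_ge0.
Qed.
End SchurComplement.

Section PsdFactorization.
Variable R : realType.

Lemma psd_gram m (M : 'M[R]_m) : psd M -> exists L : 'M[R]_m, M = L^T *m L.
Proof.
elim: m M => [|m IH] M psdM; first by exists 0; apply/matrixP => -[].
change 'M[R]_(1 + m) in M; have [symM _] := psdM.
move: psdM; rewrite (sym_blockE symM).
set a := M 0 0; set b := dlsubmx M; set D := drsubmx M => psdM.
have [a_ge0 _ discr] := psd_block psdM.
have [L' defS] := IH _ (psd_schur_compl psdM (lexx a)).
pose s := Num.sqrt a.
have ss : s * s = a by rewrite -expr2 sqr_sqrtr.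
have sVs : s * s^-1 *: b = b.
  have [a0|a_neq0] := eqVneq a 0.
    suff -> : b = 0 by rewrite scaler0.
    apply/matrixP => i j; rewrite (ord1 j) [RHS]mxE; apply/eqP.
    rewrite -sqrf_eq0 eq_le sqr_ge0 andbT.
    by have := discr (delta_mx i 0); rewrite a0 mul0r -colE !mxE.
  by rewrite mulfV ?scale1r // sqrtr_eq0 -ltNge lt_def a_neq0.
(* If a = 0 then b = 0, and the junk value s^-1 = 0 keeps the factorization valid. *)
exists (block_mx s%:M (s^-1 *: b^T) 0 L' : 'M_(1 + m)).
rewrite (@tr_block_mx _ 1 m 1 m) (@mulmx_block _ 1 m 1 m 1 m).
f_equal.
- by rewrite tr_scalar_mx mulmx0 addr0 mul_scalar_mx scale_scalar_mx ss.
- by rewrite trmx0 mul0mx addr0 tr_scalar_mx mul_scalar_mx scalerA -{1}sVs linearZ.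
- by rewrite mulmx0 addr0 mul_mx_scalar linearZ /= (trmxK b) scalerA sVs.
- rewrite -defS -scalemxAr linearZ /= -scalemxAl (trmxK b) scalerA -invfM ss.
  by rewrite addrC subrK.
Qed.

Lemma psd_det1D_ge m (K : 'M[R]_m) : psd K -> 1 + \tr K <= \det (1%:M + K).
Proof.
elim: m K => [|m IH] K psdK; first by rewrite det_mx00 /mxtrace big_ord0 addr0.
change 'M[R]_(1 + m) in K; have [symK _] := psdK.
move: psdK; rewrite (sym_blockE symK).
set a := K 0 0; set b := dlsubmx K; set D := drsubmx K => psdK.
have [a_ge0 _ discr] := psd_block psdK.
pose c := 1 + a; have c_gt0 : 0 < c by rewrite /c; lra.
have a_le_c : a <= c by rewrite /c; lra.
have := IH _ (psd_schur_compl psdK a_le_c).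
have -> : \det (1%:M + block_mx a%:M b^T b D) = c * \det (1%:M + (D - c^-1 *: (b *m b^T))).
  rewrite (scalar_mx_block 1 m 1) add_block_mx ?add0r ?addr0.
  have -> : 1%:M + a%:M = c%:M :> 'M_1 by rewrite /c raddfD.
  by rewrite det_block_schur ?gt_eqF // addrA.
have trbb_le : \tr (b^T *m b) <= a * \tr D.
  rewrite /mxtrace big_ord1 mxE mulr_sumr; apply: ler_sum => i _.
  by have := discr (delta_mx i 0); rewrite qform_delta -colE !mxE -expr2.
rewrite (@mxtrace_block _ 1 m) mxtrace_scalar mulr1n raddfB /= mxtraceZ mxtrace_mulC.
move=> /(ler_wpM2l (ltW c_gt0)); rewrite mulrDr mulrBr mulrA mulfV ?gt_eqF // mul1r.
rewrite /c in trbb_le *; nra.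
Qed.
End PsdFactorization.

Section TraceDeterminantBounds.
Variable R : realType.

Lemma qform_row p q (X : 'M[R]_(q, p)) (P : 'M[R]_p) i :
  qform P (row i X)^T (row i X)^T = (X *m P *m X^T) i i.
Proof.
by rewrite /qform trmxK -row_mul !mxE; apply: eq_bigr => k _; rewrite !mxE.
Qed.

Lemma mxtrace_mul_le p (P Q S : 'M[R]_p) :
  (forall x, qform P x x <= qform Q x x) -> psd S -> \tr (P *m S) <= \tr (Q *m S).
Proof.
move=> le_PQ /psd_gram[L ->].
have trE (X : 'M[R]_p) : \tr (X *m (L^T *m L)) = \sum_i qform X (row i L)^T (row i L)^T.
  by rewrite mulmxA mxtrace_mulC mulmxA; apply: eq_bigr => i _; rewrite qform_row.
by rewrite !trE; apply: ler_sum => i _.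
Qed.

Lemma mxtrace_mul_psd_ge0 p (P S : 'M[R]_p) : psd P -> psd S -> 0 <= \tr (P *m S).
Proof.
move=> psdP psdS; have -> : 0 = \tr (0 *m S) by rewrite mul0mx linear0.
apply: mxtrace_mul_le => // x; rewrite /qform mulmx0 mul0mx mxE.
exact: qform_ge0.
Qed.

Lemma frob_le_mxtrace p (S : 'M[R]_p) : psd S -> frob S <= \tr S.
Proof.
move=> psdS; have diag_ge0 i : 0 <= S i i by rewrite -qform_delta qform_ge0.
have tr_ge0 : 0 <= \tr S by apply: sumr_ge0 => i _.
rewrite /frob -(ger0_norm tr_ge0) -sqrtr_sqr ler_sqrt ?sqr_ge0 //.
rewrite /mxtrace expr2 mulr_suml; apply: ler_sum => i _.
by rewrite mulr_sumr; apply: ler_sum => j _; exact: psd_entry_sqr.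
Qed.

Lemma pd_lbound p (P : 'M[R]_p) :
  pd P -> exists2 c, 0 < c & forall x, c * qform 1%:M x x <= qform P x x.
Proof.
move=> pdP; have [M defP] := psd_gram (pd_psd pdP).
have unitM : M \in unitmx.
  by have := pd_unitmx pdP; rewrite defP !unitmxE det_mulmx det_tr unitrM andbb.
pose W := invmx M; pose w := \sum_i \sum_j W i j ^+ 2.
have w_ge0 : 0 <= w by do 2!(apply: sumr_ge0 => ? _); exact: sqr_ge0.
exists (w + 1)^-1 => [|x]; first by rewrite invr_gt0; lra.
pose y := M *m x; have defx : x = W *m y by rewrite /y mulKmx.
have -> : qform P x x = qform 1%:M y y by rewrite defP -(mulmx1 M^T) qform_mulmx.
rewrite ler_pdivrMl; last by lra.
suff : qform 1%:M x x <= w * qform 1%:M y y by have := qform1_ge0 y; nra.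
rewrite !qform1 /w mulr_suml; apply: ler_sum => i _.
have -> : x i 0 = \sum_j W i j * y j 0 by rewrite {1}defx mxE.
have -> : \sum_j y j 0 * y j 0 = \sum_j y j 0 ^+ 2 by apply: eq_bigr => j _; rewrite expr2.
by rewrite -expr2 cauchy_schwarz.
Qed.

Lemma det_ratio_ge p (Sg N : 'M[R]_p) e : 0 < e -> psd Sg -> pd N ->
  1 + e^-1 * \tr (N *m Sg) <= \det (Sg + e *: invmx N) / \det (e *: invmx N).
Proof.
move=> e_gt0 psdSg pdN; have [symN _] := pdN; have unitN := pd_unitmx pdN.
have e_neq0 : e != 0 by rewrite gt_eqF.
have -> : Sg + e *: invmx N = (1%:M + e^-1 *: (Sg *m N)) *m (e *: invmx N).
  rewrite mulmxDl mul1mx -scalemxAl -scalemxAr scalerA mulVf // scale1r.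
  by rewrite mulmxK // addrC.
have detQ : \det (e *: invmx N) != 0.
  by rewrite -unitfE -unitmxE unitmxZ ?unitmx_inv // unitfE.
rewrite det_mulmx mulfK //.
have [L defSg] := psd_gram psdSg.
rewrite defSg -mulmxA scalemxAr det_sylvester -scalemxAl mulmxA.
have psdK : psd (e^-1 *: (L *m N *m L^T)).
  by apply: psdZ; [rewrite invr_ge0 ltW | rewrite -{1}(trmxK L); exact/psd_mulmx/pd_psd].
apply: le_trans (psd_det1D_ge psdK).
by rewrite mxtraceZ mxtrace_mulC !mulmxA.
Qed.

End TraceDeterminantBounds.

Section RiccatiStep.
Variable R : realType.

Lemma riccati_step_psd p q (P A0 : 'M[R]_p) (B0 : 'M[R]_(p, q)) (R0 S : 'M[R]_q) e :
  0 < e -> psd P -> psd R0 -> S^T = S ->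
  let K := 1%:M + S *m (e *: (R0 + B0^T *m P *m B0)) *m S in
  psd (A0^T *m P *m A0 - e *: (A0^T *m P *m B0 *m S *m invmx K *m S *m B0^T *m P *m A0)).
Proof.
move=> e_gt0 psdP psdR0 symS K.
have [symP _] := psdP.
have pdK : pd K.
  apply: pd_add_psd; first exact: pd1.
  rewrite -{1}symS.
  by apply/psd_mulmx/psdZ; [exact: ltW | exact/psdD/psd_mulmx].
have [symK _] := pdK.
pose G := S *m B0^T *m P *m A0.
have -> : A0^T *m P *m B0 *m S *m invmx K *m S *m B0^T *m P *m A0 = G^T *m invmx K *m G.
  by rewrite /G !trmx_mul trmxK symS symP !mulmxA.
split=> [|x].
  by rewrite linearB /= linearZ /= !trmx_mul !trmxK trmx_inv symK symP symS !mulmxA.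
rewrite -/(qform _ x x) qformMB qformMZ !qform_mulmx.
(* Completing the square: the form at x equals
   qform P (z - e v) (z - e v) + e |u|^2 + e^2 qform R0 (S u) (S u). *)
set z := A0 *m x; set w := G *m x; pose u := invmx K *m w; pose v := B0 *m (S *m u).
have Ku : K *m u = w by rewrite /u mulKVmx //; exact: pd_unitmx.
pose be := (w^T *m u) 0 0.
have quadK : qform (invmx K) w w = be by rewrite /qform -mulmxA.
have quadKu : qform K u u = be by rewrite /qform -mulmxA Ku dotmxC.
have expandK : qform K u u = qform 1%:M u u + e * (qform R0 (S *m u) (S *m u) + qform P v v).
  by rewrite qformMD -{1}symS qform_mulmx qformMZ qformMD qform_mulmx.
have cross : qform P z v = be.
  by rewrite /qform /be /w /G /z /v !trmx_mul trmxK symS symP !mulmxA.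
have square : qform P (z - e *: v) (z - e *: v)
    = qform P z z - 2 * e * be + e ^+ 2 * qform P v v.
  by rewrite qformBl !qformBr !qformZl !qformZr cross (qform_sym _ _ symP) cross; ring.
have eu_ge0 : 0 <= e * qform 1%:M u u by apply: mulr_ge0; [exact: ltW | exact: qform1_ge0].
have eSu_ge0 : 0 <= e ^+ 2 * qform R0 (S *m u) (S *m u).
  by apply: mulr_ge0; [exact: sqr_ge0 | exact: qform_ge0].
have ebe : e * be = e * qform 1%:M u u + e ^+ 2 * qform R0 (S *m u) (S *m u)
    + e ^+ 2 * qform P v v by rewrite -quadKu expandK; ring.
have := qform_ge0 (z - e *: v) psdP; rewrite square quadK; lra.
Qed.

End RiccatiStep.

Lemma sqrtm_sym (R : realType) p (M : 'M[R]_p) : (sqrtm M)^T = sqrtm M.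
Proof.
rewrite /sqrtm; have [exS|noS] := pselect (exists S : 'M[R]_p, psd S /\ S *m S = M).
  by have [[symS _] _] := xgetPex 0 exS.
by rewrite xgetPN ?trmx0 // => S SP; apply: noS; exists S.
Qed.

Lemma pd_lbound_uniform (R : realType) p T (P : nat -> 'M[R]_p) :
  (forall k, (k < T)%N -> pd (P k)) ->
  exists2 c, 0 < c & forall k x, (k < T)%N -> c * qform 1%:M x x <= qform (P k) x x.
Proof.
elim: T => [|T IH] pdP; first by exists 1.
have [c c_gt0 lbc] := IH (fun k kT => pdP k (leqW kT)).
have [d d_gt0 lbd] := pd_lbound (pdP T (ltnSn T)).
exists (Num.min c d) => [|k x]; first by rewrite lt_min c_gt0 d_gt0.
rewrite ltnS leq_eqVlt => /orP[/eqP->|kT].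
  by apply: le_trans _ (lbd x); rewrite ler_wpM2r ?qform1_ge0 // ge_min lexx orbT.
by apply: le_trans _ (lbc k x kT); rewrite ler_wpM2r ?qform1_ge0 // ge_min lexx.
Qed.

Section Coercivity.
Variables (R : realType) (n m T : nat) (eps : R).
Variables (A : nat -> 'M[R]_n) (B : nat -> 'M[R]_(n, m)) (Rk : nat -> 'M[R]_m).
Variables (Sw : nat -> 'M[R]_n) (F Sx : 'M[R]_n) (Sig : nat -> 'M[R]_m).
Hypothesis eps_gt0 : 0 < eps.
Hypothesis pdRk : forall k, (k < T)%N -> pd (Rk k).
Hypothesis pdSw : forall k, (k < T)%N -> pd (Sw k).
Hypothesis pdF : pd F.
Hypothesis pdSx : pd Sx.
Hypothesis psdSig : forall k, (k < T)%N -> psd (Sig k).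

Lemma Pi_psd k : psd (Pi T eps A B Rk F Sig k).
Proof.
rewrite /Pi; elim: (T - k)%N (leq_subr k T) => [_|d IH dT] /=; first exact: pd_psd.
have kT : (T - d.+1 < T)%N by rewrite ltn_subrL (leq_ltn_trans _ dT).
apply: riccati_step_psd; first by rewrite invr_gt0.
- exact/IH/ltnW.
- exact/pd_psd/pdRk.
- exact: sqrtm_sym.
Qed.

Lemma det_SigQ_ratio_ge k c : (k < T)%N -> 0 <= c ->
  (forall x, c * qform 1%:M x x <= qform (Rk k) x x) ->
  1 + eps^-1 * c * frob (Sig k)
    <= \det (Sig k + SigQ T eps A B Rk F Sig k) / \det (SigQ T eps A B Rk F Sig k).
Proof.
move=> kT c_ge0 lbc.
have psdBPB := psd_mulmx (B k) (Pi_psd k.+1).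
apply: le_trans _ (det_ratio_ge eps_gt0 (psdSig kT) (pd_add_psd (pdRk kT) psdBPB)).
rewrite lerD2l -mulrA; apply: ler_wpM2l; first by rewrite invr_ge0 ltW.
apply: (@le_trans _ _ (c * \tr (Sig k))).
  by rewrite ler_wpM2l // frob_le_mxtrace //; exact: psdSig.
rewrite -mxtraceZ -mul_scalar_mx; apply: mxtrace_mul_le (psdSig kT) => x.
rewrite -scalemx1 qformMZ qformMD (le_trans (lbc x)) // lerDl.
exact: qform_ge0.
Qed.

Lemma Jcheck_ge_ln k c : (k < T)%N -> 0 <= c ->
  (forall x, c * qform 1%:M x x <= qform (Rk k) x x) ->
  2^-1 * (eps * ln (1 + eps^-1 * c * frob (Sig k))) <= Jcheck T eps A B Rk Sw F Sx Sig.
Proof.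
move=> kT c_ge0 lbc.
have ratio_ge1 j : (j < T)%N ->
    1 <= \det (Sig j + SigQ T eps A B Rk F Sig j) / \det (SigQ T eps A B Rk F Sig j).
  move=> jT; have := det_SigQ_ratio_ge jT (lexx 0).
  by rewrite mulr0 mul0r addr0; apply=> x; rewrite mul0r; exact/qform_ge0/pd_psd/pdRk.
have tr_ge0 j : (j < T)%N -> 0 <= \tr (Pi T eps A B Rk F Sig j.+1 *m Sw j).
  by move=> jT; apply: mxtrace_mul_psd_ge0; [exact: Pi_psd | exact/pd_psd/pdSw].
rewrite /Jcheck; apply: ler_wpM2l; first by rewrite invr_ge0 ler0n.
apply: (@le_trans _ _ (eps * ln (\det (Sig k + SigQ T eps A B Rk F Sig k)
                                   / \det (SigQ T eps A B Rk F Sig k)))).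
  apply: ler_wpM2l; first exact: ltW.
  have lb_ge1 : 1 <= 1 + eps^-1 * c * frob (Sig k).
    rewrite lerDl; apply: mulr_ge0; last exact: sqrtr_ge0.
    by apply: mulr_ge0 => //; rewrite invr_ge0 ltW.
  have ratio_ge := det_SigQ_ratio_ge kT c_ge0 lbc.
  by rewrite ler_ln ?posrE // (lt_le_trans ltr01) // (le_trans lb_ge1).
apply: ler_wpDl; first by apply: mxtrace_mul_psd_ge0; [exact: Pi_psd | exact: pd_psd].
rewrite (bigD1 (Ordinal kT)) //=; apply: ler_wpDr; last by rewrite lerDl tr_ge0.
apply: sumr_ge0 => j _; apply: addr_ge0; last exact: tr_ge0.
by apply: mulr_ge0; [exact: ltW | exact/ln_ge0/ratio_ge1].
Qed.

End Coercivity.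

Theorem lemma4 (R : realType) (n m T : nat) (eps : R)
  (A : nat -> 'M[R]_n) (B : nat -> 'M[R]_(n, m)) (Rk : nat -> 'M[R]_m)
  (Sw : nat -> 'M[R]_n) (F Sx : 'M[R]_n) :
  (0 < n)%N -> (0 < m)%N -> (0 < T)%N -> 0 < eps ->
  (forall k, (k < T)%N -> pd (Rk k)) ->
  (forall k, (k < T)%N -> pd (Sw k)) ->
  pd F -> pd Sx ->
  forall M : R, exists Bd : R,
    forall Sig : nat -> 'M[R]_m,
      (forall k, (k < T)%N -> psd (Sig k)) ->
      forall k, (k < T)%N -> Bd < frob (Sig k) ->
      M < Jcheck T eps A B Rk Sw F Sx Sig.
Proof.
move=> _ _ _ eps_gt0 pdRk pdSw pdF pdSx M.
have [c c_gt0 lbc] := pd_lbound_uniform pdRk.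
exists (eps * expR (2 * M / eps) / c) => Sig psdSig k kT Bd_lt_frob.
have lbck x : c * qform 1%:M x x <= qform (Rk k) x x := lbc k x kT.
apply: lt_le_trans _ (Jcheck_ge_ln A B eps_gt0 pdRk pdSw pdF pdSx psdSig kT (ltW c_gt0) lbck).
have E_lt : expR (2 * M / eps) < 1 + eps^-1 * c * frob (Sig k).
  have E_lt_frob : expR (2 * M / eps) < eps^-1 * (c * frob (Sig k)).
    by rewrite ltr_pdivlMl // [c * _]mulrC -ltr_pdivrMr.
  by rewrite -[eps^-1 * c * _]mulrA (lt_le_trans E_lt_frob) // lerDr.
have ln_lt : 2 * M / eps < ln (1 + eps^-1 * c * frob (Sig k)).
  by rewrite -[2 * M / eps]expRK ltr_ln ?posrE ?expR_gt0 // (lt_trans (expR_gt0 _) E_lt).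
rewrite ltr_pdivrMr // in ln_lt; nra.
Qed.
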